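(* Let $n$ be even, let $\varphi\in(0,1)$, and consider the problem BPAOAZ (defined in the context). The expected running time of $\text{EMPMO}_{\text{random}}$, in which party 1 is chosen with probability $\varphi$ and party 2 with probability $1-\varphi$ in each iteration, applied to BPAOAZ is bounded by $O\left(\left(\frac{1}{\varphi}+\frac{1}{1-\varphi}\right)\frac{n^2}{2}\log n\right)$.
   Context: BPAOAZ: for $\mathbf{x}=(x_1,\dots,x_n)\in\{0,1\}^n$ with $n$ even, party 1 has objectives $f_{11}(\mathbf{x})=\sum_{i=n/2+1}^{n}x_i$ and $f_{12}(\mathbf{x})=\sum_{i=1}^{n/2}x_i+\sum_{i=n/2+1}^{n}(1-x_i)$; party 2 has objectives $f_{21}(\mathbf{x})=\sum_{i=1}^{n/2}(1-x_i)+\sum_{i=n/2+1}^{n}x_i$ and $f_{22}(\mathbf{x})=\sum_{i=1}^{n/2}x_i$; all objectives are maximized. $F_m=(f_{m1},f_{m2})$. For party $m$: $\mathbf{z}\succeq_m\mathbf{x}$ if $f_{mk}(\mathbf{z})\ge f_{mk}(\mathbf{x})$ for $k=1,2$; $\mathbf{z}\succ_m\mathbf{x}$ if moreover strict for some $k$. The common Pareto set (solutions Pareto optimal for both parties) is $\{1^n\}$. One-bit mutation flips one uniformly random bit. $\text{EMPMO}_{\text{random}}$: choose $\mathbf{x}$ uniformly from $\{0,1\}^n$, $P=\{\mathbf{x}\}$. Each iteration: pick $\mathbf{x}\in P$ uniformly at random; pick party $m$ ($m=1$ with probability $\varphi$, $m=2$ with probability $1-\varphi$); apply one-bit mutation to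 $\mathbf{x}$ to get $\mathbf{x}'$; if no $\mathbf{z}\in P$ satisfies $\mathbf{z}\succ_m\mathbf{x}'$ or $F_m(\mathbf{z})=F_m(\mathbf{x}')$, set $P\leftarrow(P\setminus\{\mathbf{z}\in P:\mathbf{x}'\succ_m\mathbf{z}\})\cup\{\mathbf{x}'\}$; then set $P\leftarrow\{\mathbf{z}\in P:\nexists\,\mathbf{z}'\in P\setminus\{\mathbf{z}\}\text{ with }\mathbf{z}'\succeq_m\mathbf{z}\}$. The running time is the number of fitness evaluations (mutations) until the common Pareto-optimal solution is included in the population for the first time. *)

From mathcomp Require Import all_boot all_order all_algebra.
From mathcomp Require Import all_classical all_reals all_analysis.

Set Implicit Arguments.
Unset Strict Implicit.
Unset Printing Implicit Defensive.

Import Order.TTheory GRing.Theory Num.Theory.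
Local Open Scope ring_scope.

Inductive party := Party1 | Party2.

Section BPAOAZ.
Variable n : nat.

(* bit strings x = (x_1,...,x_n); index i : 'I_n stands for x_{i+1},
   so the first half {x_1..x_{n/2}} is {i | i < n/2}. *)
Definition bits := {ffun 'I_n -> bool}.
Definition pop := {set bits}.

Definition f11 (x : bits) : nat := (\sum_(i < n | n./2 <= i) nat_of_bool (x i))%N.
Definition f12 (x : bits) : nat :=
  (\sum_(i < n | i < n./2) nat_of_bool (x i) + \sum_(i < n | n./2 <= i) nat_of_bool (~~ x i))%N.
Definition f21 (x : bits) : nat :=
  (\sum_(i < n | i < n./2) nat_of_bool (~~ x i) + \sum_(i < n | n./2 <= i) nat_of_bool (x i))%N.
Definition f22 (x : bits) : nat := (\sum_(i < n | i < n./2) nat_of_bool (x i))%N.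

Definition fobj (m : party) (k : bool) (x : bits) : nat :=
  match m, k with
  | Party1, true => f11 x | Party1, false => f12 x
  | Party2, true => f21 x | Party2, false => f22 x end.

Definition Feq m (z x : bits) : bool :=
  (fobj m true z == fobj m true x) && (fobj m false z == fobj m false x).

Definition wdom m (z x : bits) : bool :=
  (fobj m true x <= fobj m true z)%N && (fobj m false x <= fobj m false z)%N.

Definition sdom m (z x : bits) : bool :=
  wdom m z x && ((fobj m true x < fobj m true z)%N || (fobj m false x < fobj m false z)%N).

Definition flip (x : bits) (i : 'I_n) : bits := [ffun j => if j == i then ~~ x j else x j].

Definition update (m : party) (P : pop) (x' : bits) : pop :=
  let P1 := if [exists z in P, sdom m z x' || Feq m z x'] then P
            else (P :\: [set z in P | sdom m x' z]) :|: [set x'] in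
  [set z in P1 | ~~ [exists z' in P1, (z' != z) && wdom m z' z]].

Definition ones : bits := [ffun _ => true].
Definition hit (P : pop) : bool := ones \in P.

Variable R : realType.
Variable phi : R.

(* one-iteration transition probability P -> Q:
   x uniform in P, party 1 w.p. phi / party 2 w.p. 1-phi, bit i uniform. *)
Definition kernel (P Q : pop) : R :=
  \sum_(x in P) \sum_(i < n)
     ((#|P|%:R)^-1 * (n%:R)^-1) *
     (phi * (update Party1 P (flip x i) == Q)%:R
      + (1 - phi) * (update Party2 P (flip x i) == Q)%:R).

(* mu t Q = Pr[ the population after t mutations is Q and 1^n has not been
   in the population at any time 0..t ]  (initial population {x}, x uniform) *)
Fixpoint mu (t : nat) : {ffun pop -> R} :=
  match t with
  | 0 => [ffun Q : pop => if hit Q then 0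
                         else \sum_(x : bits) ((2 ^ n)%:R)^-1 * (Q == [set x])%:R]
  | t'.+1 => [ffun Q : pop => if hit Q then 0
                              else \sum_(P : pop) mu t' P * kernel P Q]
  end.

(* Pr[T > t], T = number of mutations until 1^n first enters the population *)
Definition tail_prob (t : nat) : R := \sum_(Q : pop) mu t Q.

(* expected running time E[T] = sum_{t >= 0} Pr[T > t]  (in \bar R, may be +oo) *)
Definition expected_runtime : \bar R := (\sum_(t <oo) (tail_prob t)%:E)%E.

End BPAOAZ.

From Pilot Require Import Defs.
From mathcomp Require Import all_boot all_order all_algebra.
From mathcomp Require Import all_classical all_reals all_analysis.
From mathcomp Require Import ring lra zify.

Set Implicit Arguments.
Unset Strict Implicit.
Unset Printing Implicit Defensive.

Import Order.TTheory GRing.Theory Num.Theory.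

(* A point of maximal weight (number of ones) in the population is never
   weakly dominated by another member, for either party: weak dominance is
   monotone in the numbers of ones of both halves, and distinct members have
   distinct such pairs.  Hence the maximal weight [s] never decreases, whichever
   party acts.  After a step the population is mutually non-dominated for the
   acting party, so one of its objectives is injective on it and it has at
   most [n + 1] members; hence one step raises [s] with
   probability at least [(n - s) / (n (n + 1))].  The potential
   [n (n + 1) H_(n - s)] therefore drops by at least 1 in expectation per
   step, and additive drift bounds the expected running time by
   [n (n + 1) H_n = O(n^2 log n)], for every [phi] and without using that [n]
   is even. *)

Section Objectives.
Variable n : nat.
Implicit Types (x y z w : bits n) (P Q : pop n) (m : party).

Definition weight x : nat := (\sum_(i < n) nat_of_bool (x i))%N.
Definition zeros x : nat := (\sum_(i < n) nat_of_bool (~~ x i))%N.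

(* The two objectives of either party are functions of these two counts. *)
Definition halves x : nat * nat := (f22 x, f11 x).

Lemma weightE x : weight x = (f22 x + f11 x)%N.
Proof.
rewrite /weight /f22 /f11 (bigID (fun i : 'I_n => i < n./2)) /=.
by congr (_ + _)%N; apply: eq_bigl => i /=; rewrite ltnNge negbK.
Qed.

Lemma weight_add_zeros x : (weight x + zeros x)%N = n.
Proof.
rewrite /weight /zeros -big_split /= -[RHS]card_ord -sum1_card.
by apply: eq_bigr => i _; case: (x i).
Qed.

Lemma weight_le x : (weight x <= n)%N.
Proof. by rewrite -(weight_add_zeros x) leq_addr. Qed.

Lemma weight_flip x i : x i = false -> weight (flip x i) = (weight x).+1.
Proof.
move=> xi; rewrite /weight (bigD1 i) //= [in RHS](bigD1 i) //= !ffunE eqxx xi.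
by congr _.+1; apply: eq_bigr => j /negbTE ji; rewrite ffunE ji.
Qed.

Lemma weight_eq_ones x : weight x = n -> x = ones n.
Proof.
move=> wx; have /eqP : zeros x = 0%N by have := weight_add_zeros x; lia.
rewrite sum_nat_eq0 => /forallP x1; apply/ffunP => i; rewrite ffunE.
by move: (x1 i); case: (x i).
Qed.

Lemma f12_add_f11 x : (f12 x + f11 x = f22 x + \sum_(i < n | n./2 <= i) 1)%N.
Proof.
rewrite /f12 /f11 /f22 -addnA -big_split /=; congr (_ + _)%N.
by apply: eq_bigr => i _; case: (x i).
Qed.

Lemma f21_add_f22 x : (f21 x + f22 x = \sum_(i < n | i < n./2) 1 + f11 x)%N.
Proof.
rewrite /f21 /f22 /f11 addnAC -big_split /=; congr (_ + _)%N.
by apply: eq_bigr => i _; case: (x i).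
Qed.

Lemma wdom_halves m z x :
  wdom m z x -> (f22 x <= f22 z)%N /\ (f11 x <= f11 z)%N.
Proof.
case: m; rewrite /wdom /= => /andP [le1 le2].
- by have := f12_add_f11 x; have := f12_add_f11 z; lia.
- by have := f21_add_f22 x; have := f21_add_f22 z; lia.
Qed.

Lemma halves_Feq m z x : halves z = halves x -> Feq m z x.
Proof.
case=> e22 e11; case: m; rewrite /Feq /=; apply/andP; split; apply/eqP => //.
- by have := f12_add_f11 x; have := f12_add_f11 z; lia.
- by have := f21_add_f22 x; have := f21_add_f22 z; lia.
Qed.

Lemma wdom_weight m z x : wdom m z x -> (weight x <= weight z)%N.
Proof. by move/wdom_halves; rewrite !weightE; lia. Qed.

Lemma wdom_weight_lt m z x :
  wdom m z x -> halves z != halves x -> (weight x < weight z)%N.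
Proof.
move/wdom_halves => [le22 le11]; rewrite !weightE /halves xpair_eqE negb_and.
by case/orP => /eqP; lia.
Qed.

(* One of party [m]'s objectives; it is injective on any set of mutually
   non-dominated points, which bounds the population size by [n.+1]. *)
Definition front_key m x : nat := if m is Party1 then f11 x else f22 x.

Lemma front_key_le m x : (front_key m x <= n)%N.
Proof. by case: m => /=; have := weight_le x; rewrite weightE; lia. Qed.

Lemma eq_front_key_wdom m z x :
  front_key m z = front_key m x -> wdom m z x || wdom m x z.
Proof. by case: m => /= e; rewrite /wdom /= e leqnn /= ?andbT; exact: leq_total. Qed.

Definition nondominated m Q : pop n :=
  [set z in Q | ~~ [exists z' in Q, (z' != z) && wdom m z' z]].

Definition accept m P x' : pop n :=
  if [exists z in P, sdom m z x' || Feq m z x'] then P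
  else (P :\: [set z in P | sdom m x' z]) :|: [set x'].

Lemma updateE m P x' : update m P x' = nondominated m (accept m P x').
Proof. by []. Qed.

Lemma nondominated_sub m Q : nondominated m Q \subset Q.
Proof. by apply/fintype.subsetP => z; rewrite inE => /andP[]. Qed.

Lemma card_nondominated m Q : (#|nondominated m Q| <= n.+1)%N.
Proof.
pose key z : 'I_n.+1 := inord (front_key m z).
have key_inj : {in nondominated m Q &, injective key}.
  move=> z1 z2 z1F z2F /(congr1 val); rewrite /= !inordK ?ltnS ?front_key_le //.
  move=> /eq_front_key_wdom dom12; apply/eqP; apply: contraT => ne12.
  have [z1Q z2Q] := (fintype.subsetP (nondominated_sub m Q) _ z1F,
                     fintype.subsetP (nondominated_sub m Q) _ z2F).
  move: z1F z2F; rewrite !inE => /andP [_ /existsPn nd1] /andP [_ /existsPn nd2].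
  case/orP: dom12 => dom.
  - by move: (nd2 z1); rewrite z1Q ne12 dom.
  - by move: (nd1 z2); rewrite z2Q eq_sym ne12 dom.
by rewrite -(card_in_imset key_inj) -[X in (_ <= X)%N]card_ord max_card.
Qed.

Lemma nondominated_heavier m Q z : {in Q &, injective halves} -> z \in Q ->
  exists2 w, w \in nondominated m Q & (weight z <= weight w)%N.
Proof.
move=> inj zQ; case: (arg_maxnP weight zQ) => w wQ heaviest.
exists w; last exact: heaviest.
rewrite inE; apply/andP; split=> //; apply/existsPn => z'; apply/negP => /andP [z'Q /andP [ne dom]].
have := wdom_weight_lt dom; rewrite (inj_in_eq inj) // ne => /(_ isT).
by have /= := heaviest z' z'Q; lia.
Qed.

Lemma accept_inj m P x' :
  {in P &, injective halves} -> {in accept m P x' &, injective halves}.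
Proof.
rewrite /accept; case: ifPn => // /existsPn rejected inj.
have new_halves z : z \in P -> halves z = halves x' -> False.
  by move=> zP /(halves_Feq m); move: (rejected z); rewrite zP => /norP [_ /negP].
move=> z1 z2; rewrite !inE => /orP [/andP [_ z1P]|/eqP ->] /orP [/andP [_ z2P]|/eqP ->] //.
- exact: inj.
- by move=> /new_halves.
- by move=> /esym /new_halves.
Qed.

Lemma accept_heavier m P x' y : y \in x' |: P ->
  exists2 w, w \in accept m P x' & (weight y <= weight w)%N.
Proof.
rewrite /accept; case: ifPn => [/existsP [z /andP [zP dom]]|_] yP.
- case/setU1P: yP => [->|]; last by exists y.
  exists z => //; apply: (@wdom_weight m).
  by case/orP: dom => [/andP []|/andP [/eqP e1 /eqP e2]]; rewrite // /wdom e1 e2 !leqnn.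
- case/setU1P: yP => [->|yP]; first by exists x' => //; rewrite !inE eqxx orbT.
  case: (boolP (sdom m x' y)) => [/andP [dom _]|ndom].
  + by exists x'; [rewrite !inE eqxx orbT | exact: wdom_weight dom].
  + by exists y; rewrite // !inE yP ndom.
Qed.

Lemma update_inj m P x' : {in P &, injective halves} ->
  {in update m P x' &, injective halves}.
Proof.
move=> inj z1 z2; rewrite updateE => /(fintype.subsetP (nondominated_sub _ _)) z1A.
move=> /(fintype.subsetP (nondominated_sub _ _)); exact: (accept_inj inj z1A).
Qed.

Lemma update_heavier m P x' y : {in P &, injective halves} -> y \in x' |: P ->
  exists2 w, w \in update m P x' & (weight y <= weight w)%N.
Proof.
move=> inj /(accept_heavier m) [w1 w1A le1].
have [w wF le2] := nondominated_heavier m (accept_inj inj) w1A.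
by exists w; rewrite ?updateE // (leq_trans le1).
Qed.

Lemma card_update_gt0 m P x' : {in P &, injective halves} ->
  (0 < #|update m P x'|)%N.
Proof.
move=> inj; have [w wU _] := update_heavier m inj (setU11 x' P).
by apply/card_gt0P; exists w.
Qed.

Definition max_weight P : nat := (\max_(z in P) weight z)%N.

Lemma max_weight_le P : (max_weight P <= n)%N.
Proof. by apply/bigmax_leqP => z _; exact: weight_le. Qed.

Lemma max_weight_update m P x' y : {in P &, injective halves} ->
  y \in x' |: P -> (weight y <= max_weight (update m P x'))%N.
Proof.
move=> inj /(update_heavier m inj) [w wU le]; apply: leq_trans le _.
exact: leq_bigmax_cond.
Qed.

Lemma max_weight_le_update m P x' : {in P &, injective halves} ->
  (max_weight P <= max_weight (update m P x'))%N.
Proof.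
move=> inj; apply/bigmax_leqP => y yP.
by apply: max_weight_update; rewrite // setU1r.
Qed.

Lemma max_weight_lt P : (0 < #|P|)%N -> ~~ hit P -> (max_weight P < n)%N.
Proof.
rewrite /max_weight => /(eq_bigmax_cond weight) [z zP ->] not_hit.
rewrite ltn_neqAle weight_le andbT; apply: contra not_hit => /eqP /weight_eq_ones z1.
by rewrite /hit -z1.
Qed.

End Objectives.
Arguments halves {n} x.
Arguments weight {n} x.

Local Open Scope ring_scope.

Section AdditiveDrift.
Variables (R : realDomainType) (S : finType).
Variables (mu : nat -> S -> R) (K : S -> S -> R) (g : S -> R).
Hypothesis mu_ge0 : forall t s, 0 <= mu t s.
Hypothesis g_ge0 : forall s, 0 <= g s.
Hypothesis mu_step : forall t s, mu t.+1 s <= \sum_r mu t r * K r s.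
Hypothesis drift : forall t r, mu t r != 0 -> \sum_s K r s * g s <= g r - 1.

Lemma additive_drift T : \sum_(t < T) \sum_s mu t s <= \sum_s mu 0 s * g s.
Proof.
pose Phi t := \sum_s mu t s * g s.
have Phi_ge0 t : 0 <= Phi t by apply: sumr_ge0 => s _; exact: mulr_ge0.
have Phi_step t : Phi t.+1 <= Phi t - \sum_s mu t s.
  apply: le_trans (_ : \sum_s (\sum_r mu t r * K r s) * g s <= _).
    by apply: ler_sum => s _; exact: ler_wpM2r.
  under eq_bigr do rewrite big_distrl.
  rewrite exchange_big -sumrB; apply: ler_sum => r _ /=.
  under eq_bigr do rewrite -mulrA.
  rewrite -big_distrr -[X in _ - X]mulr1 -mulrBr /=.
  have [->|mu_neq0] := eqVneq (mu t r) 0; first by rewrite !mul0r.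
  exact: ler_wpM2l (drift mu_neq0).
suff : \sum_(t < T) \sum_s mu t s + Phi T <= Phi 0 by have := Phi_ge0 T; rewrite /Phi; lra.
elim: T => [|T IH]; first by rewrite big_ord0 add0r.
by rewrite big_ord_recr /=; have := Phi_step T; lra.
Qed.

End AdditiveDrift.

Section EMPMO.
Variables (n : nat) (R : realType) (phi : R).
Hypotheses (phi_ge0 : 0 <= phi) (phi_le1 : phi <= 1).
Implicit Types (P Q : pop n).

Definition admissible P :=
  [/\ {in P &, injective halves}, (0 < #|P|)%N, (#|P| <= n.+1)%N & ~~ hit P].

Lemma uniform_choice_ge0 (P : pop n) : 0 <= (#|P|%:R^-1 * n%:R^-1 : R).
Proof. by apply: mulr_ge0; rewrite invr_ge0 ler0n. Qed.

Lemma mix_ge0 (c : R) (b1 b2 : bool) :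
  0 <= c -> 0 <= c * (phi * b1%:R + (1 - phi) * b2%:R).
Proof.
by move=> c_ge0; apply: mulr_ge0 => //; apply: addr_ge0; apply: mulr_ge0; rewrite ?subr_ge0.
Qed.

Lemma kernel_ge0 P Q : 0 <= Defs.kernel phi P Q.
Proof. by apply: sumr_ge0 => x _; apply: sumr_ge0 => i _; apply/mix_ge0/uniform_choice_ge0. Qed.

Lemma kernel_gt0_update P Q : 0 < Defs.kernel phi P Q ->
  exists x i m, x \in P /\ update m P (flip x i) = Q.
Proof.
move=> /lt0r_neq0 /eqP k_neq0.
have [x /andP [xP /lt0r_neq0 /eqP s_neq0]] := psumr_neq0P
  (fun x _ => sumr_ge0 _ (fun i _ => mix_ge0 _ _ (uniform_choice_ge0 P))) k_neq0.
have [i /andP [_ term_gt0]] :=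
  psumr_neq0P (fun i _ => mix_ge0 _ _ (uniform_choice_ge0 P)) s_neq0.
exists x, i; case: (eqVneq (update Party1 P (flip x i)) Q) => [e1|ne1].
  by exists Party1.
case: (eqVneq (update Party2 P (flip x i)) Q) => [e2|ne2]; first by exists Party2.
by move: term_gt0; rewrite (negbTE ne1) (negbTE ne2) !mulr0 addr0 mulr0 ltxx.
Qed.

Lemma mu_ge0 t Q : 0 <= mu n phi t Q.
Proof.
elim: t Q => [|t IH] Q /=; rewrite ffunE; case: ifP => _ //.
  by apply: sumr_ge0 => x _; apply: mulr_ge0; rewrite ?ler0n // invr_ge0 ler0n.
by apply: sumr_ge0 => P _; apply: mulr_ge0; [exact: IH | exact: kernel_ge0].
Qed.

Lemma mu_step t Q : mu n phi t.+1 Q <= \sum_P mu n phi t P * Defs.kernel phi P Q.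
Proof.
rewrite /= ffunE; case: ifP => // _.
by apply: sumr_ge0 => P _; apply: mulr_ge0; [exact: mu_ge0 | exact: kernel_ge0].
Qed.

Lemma mu_admissible t Q : mu n phi t Q != 0 -> admissible Q.
Proof.
elim: t Q => [|t IH] Q /=; rewrite ffunE; case: ifPn => [_|not_hit]; rewrite ?eqxx //.
  move=> /eqP /psumr_neq0P [x _|x /andP [_]].
    by apply: mulr_ge0; rewrite ?invr_ge0 ler0n.
  case: eqP => [eQ _|]; last by rewrite mulr0 ltxx.
  by subst Q; split; rewrite ?cards1 // => z1 z2 /set1P -> /set1P ->.
move=> /eqP /psumr_neq0P [P _|P /andP [_]].
  by apply: mulr_ge0; [exact: mu_ge0 | exact: kernel_ge0].
rewrite mulr_ge0_gt0 ?mu_ge0 ?kernel_ge0 // => /andP [/lt0r_neq0 /IH adm_P].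
case/kernel_gt0_update => x [i [m [_ eQ]]]; subst Q; case: adm_P => inj _ _ _.
by split; [exact: update_inj | exact: card_update_gt0 | exact: card_nondominated |].
Qed.

Lemma sum_eq_indicator (U : pop n) (G : pop n -> R) :
  \sum_Q (U == Q)%:R * G Q = G U.
Proof.
rewrite (bigD1 U) //= eqxx mul1r big1 ?addr0 // => Q /negbTE.
by rewrite eq_sym => ->; rewrite mul0r.
Qed.

Lemma kernel_expectation P (G : pop n -> R) :
  \sum_Q Defs.kernel phi P Q * G Q =
  \sum_(x in P) \sum_(i < n) (#|P|%:R^-1 * n%:R^-1) *
     (phi * G (update Party1 P (flip x i)) + (1 - phi) * G (update Party2 P (flip x i))).
Proof.
under eq_bigr do rewrite big_distrl /=.
under eq_bigr do under eq_bigr do rewrite big_distrl /=.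
rewrite exchange_big /=; apply: eq_bigr => x _.
rewrite exchange_big /=; apply: eq_bigr => i _.
set c := _ * _; set U1 := update Party1 _ _; set U2 := update Party2 _ _.
transitivity (\sum_Q (c * phi * ((U1 == Q)%:R * G Q) + c * (1 - phi) * ((U2 == Q)%:R * G Q))).
  by apply: eq_bigr => Q _; ring.
by rewrite big_split /= -!big_distrr /= !sum_eq_indicator; ring.
Qed.

Lemma le_harmonic_series (d1 d2 : nat) :
  (d1 <= d2)%N -> series (@harmonic R) d1 <= series harmonic d2.
Proof. exact: (nondecreasing_series (fun k _ _ => harmonic_ge0 k)). Qed.

Definition potential P : R :=
  (n * n.+1)%:R * series harmonic (n - max_weight P)%N.

Lemma potential_ge0 P : 0 <= potential P.
Proof. by apply: mulr_ge0; rewrite ?ler0n //; apply: sumr_ge0 => k _; exact: harmonic_ge0. Qed.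

Lemma potential_le P : potential P <= (n * n.+1)%:R * series harmonic n.
Proof. by apply: ler_wpM2l; rewrite ?ler0n // le_harmonic_series ?leq_subr. Qed.

Lemma potential_update_le m P x' : {in P &, injective halves} ->
  potential (update m P x') <= potential P.
Proof.
move=> inj; apply: ler_wpM2l; rewrite ?ler0n // le_harmonic_series //.
by rewrite leq_sub2l // max_weight_le_update.
Qed.

Lemma potential_update_lt m P x i : {in P &, injective halves} ->
  weight x = max_weight P -> x i = false ->
  potential (update m P (flip x i)) <=
    potential P - (n * n.+1)%:R / (n - max_weight P)%:R.
Proof.
move=> inj x_max xi.
have := max_weight_update m inj (setU11 (flip x i) P).
rewrite weight_flip // x_max => lt_max.
have [d d_def] : exists d, (n - max_weight P)%N = d.+1.
  exists (n - max_weight P).-1; rewrite prednK //.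
  by have := max_weight_le (update m P (flip x i)); lia.
rewrite /potential d_def seriesSr /= mulrDr addrK.
by apply: ler_wpM2l; rewrite ?ler0n // le_harmonic_series //; lia.
Qed.

Lemma count_improving P xs : xs \in P ->
  \sum_(x in P) \sum_(i < n) ((x == xs) && ~~ x i)%:R = (n - weight xs)%:R :> R.
Proof.
move=> xsP; rewrite (bigD1 xs) //= [X in _ + X]big1 ?addr0 => [|x /andP [_ /negbTE x_ne]].
  have -> : (n - weight xs = zeros xs)%N by have := weight_add_zeros xs; lia.
  by rewrite /zeros natr_sum; apply: eq_bigr => i _; rewrite eqxx.
by apply: big1 => i _; rewrite x_ne.
Qed.

Lemma potential_drift P : admissible P ->
  \sum_Q Defs.kernel phi P Q * potential Q <= potential P - 1.
Proof.
case=> inj card_gt0 card_le not_hit.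
have [xs xsP xs_max] := eq_bigmax_cond weight card_gt0; rewrite -/(max_weight P) in xs_max.
have s_lt := max_weight_lt card_gt0 not_hit.
set s := max_weight P in xs_max s_lt *.
set c := (#|P|%:R^-1 * n%:R^-1 : R); set K := (n * n.+1)%:R : R.
set Y := K / (n - s)%:R.
pose b x i : R := ((x == xs) && ~~ x i)%:R.
have step_le m x i : potential (update m P (flip x i)) <= potential P - b x i * Y.
  rewrite /b; case: (boolP ((x == xs) && ~~ x i)) => [/andP [/eqP -> /negbTE xsi]|_].
    by rewrite mul1r; apply: potential_update_lt.
  by rewrite mul0r subr0; apply: potential_update_le.
rewrite kernel_expectation.
apply: le_trans (_ : \sum_(x in P) \sum_(i < n) c * (potential P - b x i * Y) <= _).
  apply: ler_sum => x _; apply: ler_sum => i _; apply: ler_wpM2l; first exact: uniform_choice_ge0.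
  set T := potential P - _; apply: le_trans (_ : phi * T + (1 - phi) * T <= _).
    by apply: lerD; apply: ler_wpM2l; rewrite ?subr_ge0 ?step_le.
  by rewrite -mulrDl addrC subrK mul1r.
have nR : n%:R != 0 :> R by rewrite pnatr_eq0 -lt0n (leq_ltn_trans _ s_lt).
have pR : #|P|%:R != 0 :> R by rewrite pnatr_eq0 -lt0n.
have dR : (n - s)%:R != 0 :> R by rewrite pnatr_eq0 subn_eq0 -ltnNge.
rewrite (eq_bigr (fun x => (\sum_(i < n) c * potential P) - c * Y * \sum_(i < n) b x i)).
  rewrite sumrB -[X in _ - X]big_distrr /= count_improving // -xs_max.
  rewrite !sumr_const card_ord.
  set T := potential P.
  have c_inv : c * (#|P|%:R * n%:R) = 1 by rewrite /c mulrACA !mulVf ?mulr1.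
  have -> : c * T *+ n *+ #|P| = T.
    by rewrite -mulrnA -mulr_natr natrM mulrAC [n%:R * _]mulrC c_inv mul1r.
  have -> : c * Y * (n - s)%:R = n.+1%:R / #|P|%:R.
    by rewrite /Y /K natrM -mulrA mulfVK // /c -mulrA mulKf // mulrC.
  have : 1 <= n.+1%:R / #|P|%:R :> R by rewrite ler_pdivlMr ?ltr0n // mul1r ler_nat.
  lra.
move=> x _; rewrite big_distrr -sumrB /=; apply: eq_bigr => i _.
by rewrite mulrBr; congr (_ - _); rewrite mulrCA mulrC.
Qed.

Lemma initial_mass_le1 : \sum_Q mu n phi 0 Q <= 1.
Proof.
apply: le_trans (_ : \sum_Q \sum_(x : bits n) (2 ^ n)%:R^-1 * (Q == [set x])%:R <= _).
  apply: ler_sum => Q _; rewrite ffunE; case: ifP => _ //.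
  by apply: sumr_ge0 => x _; apply: mulr_ge0; rewrite ?invr_ge0 ler0n.
have singleton x : \sum_(Q : pop n) (Q == [set x])%:R = 1 :> R.
  by rewrite (bigD1 [set x]) //= eqxx big1 ?addr0 // => Q /negbTE ->.
rewrite exchange_big /=; under eq_bigr do rewrite -big_distrr /= singleton mulr1.
rewrite sumr_const card_ffun card_bool card_ord; set k : R := (2 ^ n)%:R.
by rewrite -mulr_natr -/k mulVf // pnatr_eq0 expn_eq0.
Qed.

Lemma expected_runtime_le :
  (expected_runtime n phi <= ((n * n.+1)%:R * series harmonic n)%:E)%E.
Proof.
apply: lime_le.
  by apply: is_cvg_nneseries => t _ _; rewrite lee_fin; apply: sumr_ge0 => Q _; exact: mu_ge0.
apply: nearW => T; rewrite sumEFin lee_fin big_mkord.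
apply: le_trans (additive_drift mu_ge0 potential_ge0 mu_step _ T) _.
  by move=> t P /mu_admissible; exact: potential_drift.
apply: le_trans (_ : \sum_Q mu n phi 0 Q * ((n * n.+1)%:R * series harmonic n) <= _).
  by apply: ler_sum => Q _; apply: ler_wpM2l; [exact: mu_ge0 | exact: potential_le].
rewrite -big_distrl /= -[X in _ <= X]mul1r; apply: ler_wpM2r; last exact: initial_mass_le1.
by apply: mulr_ge0; rewrite ?ler0n //; apply: sumr_ge0 => k _; exact: harmonic_ge0.
Qed.

End EMPMO.

Lemma harmonic_series_le_ln (R : realType) (d : nat) :
  series (@harmonic R) d.+1 <= 1 + ln d.+1%:R.
Proof.
elim: d => [|d IH]; first by rewrite seriesSr /series /= big_geq // add0r ln1 addr0 invr1.
rewrite seriesSr /=.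
have d1_gt0 : 0 < d.+1%:R :> R by rewrite ltr0n.
have d2_gt0 : 0 < d.+2%:R :> R by rewrite ltr0n.
have : ln (1 - d.+2%:R^-1) <= - d.+2%:R^-1 :> R.
  by apply: le_ln1Dx; rewrite ltrNl opprK invf_lt1 // ltr1n.
have -> : 1 - d.+2%:R^-1 = d.+1%:R / d.+2%:R :> R.
  rewrite [d.+2%:R]mulrSr; field.
  by rewrite gt_eqF //; have := ler0n R d; lra.
rewrite lnM ?posrE ?invr_gt0 // lnV ?posrE //.
move: IH; set H := series _ _; set l1 := ln _; set l2 := ln _; set w := _^-1.
lra.
Qed.

Lemma one_le_ln (R : realType) (n : nat) : (4 <= n)%N -> 1 <= ln n%:R :> R.
Proof.
move=> n_ge4; have := harmonic_series_le_ln R n.-1; rewrite prednK; last by lia.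
have : series (@harmonic R) 4%N <= series harmonic n by exact: le_harmonic_series.
have : 2 <= series (@harmonic R) 4%N.
  have h k : harmonic k = k.+1%:R^-1 :> R by [].
  rewrite !seriesSr !h (_ : series _ 0 = 0) ?add0r; last by rewrite seriesEord /= big_ord0.
  lra.
lra.
Qed.

Theorem theorem2 (R : realType) :
  exists C : R, 0 < C /\ exists N : nat,
    forall (n : nat) (phi : R), ~~ odd n -> (N <= n)%N -> 0 < phi < 1 ->
      (expected_runtime n phi <=
        (C * ((phi^-1 + (1 - phi)^-1) * (n%:R ^+ 2 / 2) * ln n%:R))%:E)%E.
Proof.
exists 8; split; first lra.
exists 4%N => n phi _ n_ge4 /andP [phi_gt0 phi_lt1].
apply: le_trans (expected_runtime_le n (ltW phi_gt0) (ltW phi_lt1)) _; rewrite lee_fin.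
have H_le : series (@harmonic R) n <= 1 + ln n%:R.
  by have := harmonic_series_le_ln R n.-1; rewrite prednK //; lia.
have ln_ge1 := one_le_ln R n_ge4.
have a_ge1 : 1 <= phi^-1 + (1 - phi)^-1.
  have : 1 <= phi^-1 by rewrite invf_ge1 // ltW.
  have : 0 < (1 - phi)^-1 by rewrite invr_gt0 subr_gt0.
  lra.
have N_ge4 : 4 <= n%:R :> R by rewrite (ler_nat R 4).
rewrite natrM -addn1 natrD.
set N := n%:R : R in H_le ln_ge1 N_ge4 *; set L := ln N in H_le ln_ge1 *.
set a := phi^-1 + _ in a_ge1 *; set H := series _ n in H_le *.
have : 0 <= N * L * (N - 1) by apply: mulr_ge0; [apply: mulr_ge0|]; lra.
have : 0 <= N ^+ 2 * L * (a - 1) by apply: mulr_ge0; [apply: mulr_ge0; rewrite ?sqr_ge0|]; lra.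
have : 0 <= N * (N + 1) * (2 * L - H) by apply: mulr_ge0; [apply: mulr_ge0|]; lra.
rewrite expr2; nra.
Qed.
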